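(* If $c\in SO(\mathbb{R}_+)$ and $\alpha\in SOS(\mathbb{R}_+)$, then $c\circ\alpha\in SO(\mathbb{R}_+)$, $c-c\circ\alpha\in C_b(\mathbb{R}_+)$, and $\lim_{t\to s}\big(c(t)-c(\alpha(t))\big)=0$ for $s\in\{0,\infty\}$.
   Context: $\mathbb{R}_+=(0,\infty)$. $C_b(\mathbb{R}_+)$: bounded continuous complex functions on $\mathbb{R}_+$. $SO(\mathbb{R}_+)$ is the set of $f\in C_b(\mathbb{R}_+)$ with $\lim_{r\to s}\sup\{|f(t)-f(\tau)|:t,\tau\in[\lambda r,r]\}=0$ for $s\in\{0,\infty\}$ and each (equivalently some) $\lambda\in(0,1)$. $SOS(\mathbb{R}_+)$ is the set of orientation-preserving diffeomorphisms $\alpha$ of $\mathbb{R}_+$ onto itself with no fixed points in $\mathbb{R}_+$ such that $\log\alpha'\in C_b(\mathbb{R}_+)$ and $\alpha'\in SO(\mathbb{R}_+)$. *)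

From Stdlib Require Import Reals Lra.
From Coquelicot Require Import Coquelicot.
Open Scope R_scope.

(* C_b(R_+): bounded continuous complex-valued functions on (0,oo).
   Functions are total on R; only their values on (0,oo) matter. *)
Definition Cb (f : R -> C) : Prop :=
  (forall t, 0 < t -> continuous f t) /\
  (exists M, forall t, 0 < t -> Cmod (f t) <= M).

(* "lim_{r->s} sup{|f t - f tau| : t,tau in [lambda r, r]} = 0",
   unfolded: for every eps>0 the sup is <= eps for r near s. *)
Definition osc_vanishes_at_0 (f : R -> C) (lam : R) : Prop :=
  forall eps, 0 < eps -> exists delta, 0 < delta /\
    forall r, 0 < r < delta ->
      forall t tau, lam * r <= t <= r -> lam * r <= tau <= r ->
        Cmod (f t - f tau) <= eps.

Definition osc_vanishes_at_oo (f : R -> C) (lam : R) : Prop :=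
  forall eps, 0 < eps -> exists N, 0 < N /\
    forall r, N < r ->
      forall t tau, lam * r <= t <= r -> lam * r <= tau <= r ->
        Cmod (f t - f tau) <= eps.

Definition SO (f : R -> C) : Prop :=
  Cb f /\
  forall lam, 0 < lam < 1 -> osc_vanishes_at_0 f lam /\ osc_vanishes_at_oo f lam.

Definition C1_on_Rplus (a : R -> R) : Prop :=
  (forall t, 0 < t -> ex_derive a t) /\
  (forall t, 0 < t -> continuous (Derive a) t).

Definition orient_pres_diffeo_Rplus (a : R -> R) : Prop :=
  (forall t, 0 < t -> 0 < a t) /\
  C1_on_Rplus a /\
  (exists b : R -> R,
      (forall y, 0 < y -> 0 < b y) /\
      (forall t, 0 < t -> b (a t) = t) /\
      (forall y, 0 < y -> a (b y) = y) /\
      C1_on_Rplus b) /\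
  (forall s t, 0 < s -> s < t -> a s < a t).

Definition SOS (a : R -> R) : Prop :=
  orient_pres_diffeo_Rplus a /\
  (forall t, 0 < t -> a t <> t) /\
  Cb (fun t => RtoC (ln (Derive a t))) /\
  SO (fun t => RtoC (Derive a t)).

(* An SOS map has [ln alpha'] bounded, so [alpha'] is pinched between two
   positive constants, and [alpha] is squeezed between two linear functions:
   [m t <= alpha t <= M t].  Hence, for [t] in a window [[lam r, r]], [alpha t]
   stays in the window [[(m lam / M) (M r), M r]], and both [t] and [alpha t]
   lie in [[(m / M) (M t), M t]].  Slow oscillation of [c] on these rescaled
   windows gives slow oscillation of [c o alpha] and the vanishing of
   [c - c o alpha] at [0] and at [oo]; both ends are handled at once, as
   filters on [(0, oo)] that are stable under dilations. *)
From Stdlib Require Import Reals Lra.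
From Coquelicot Require Import Coquelicot.
Open Scope R_scope.

Lemma exp_le_compat x y : x <= y -> exp x <= exp y.
Proof.
intros Hxy; destruct (Rle_lt_or_eq_dec _ _ Hxy) as [Hlt | ->]; [|lra].
now left; apply exp_increasing.
Qed.

Lemma ball_R (x d y : R) : ball x d y <-> x - d < y < x + d.
Proof.
change (Rabs (y - x) < d <-> x - d < y < x + d).
split; [intros H; apply Rabs_def2 in H | intros H; apply Rabs_def1]; lra.
Qed.

Lemma is_derive_increasing_nonneg (a : R -> R) t l :
  0 < t -> (forall s u, 0 < s -> s < u -> a s < a u) -> is_derive a t l -> 0 <= l.
Proof.
intros Ht Hinc Hd; apply is_derive_Reals in Hd.
destruct (Rle_or_lt 0 l) as [Hl | Hl]; [easy|].
destruct (Hd (- l) ltac:(lra)) as [d Hdd].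
pose proof (cond_pos d) as Hd0.
assert (Hh : Rabs (d / 2) < d) by (rewrite Rabs_pos_eq; lra).
specialize (Hdd (d / 2) ltac:(lra) Hh).
assert (Hq : 0 < (a (t + d / 2) - a t) / (d / 2)).
{ apply Rdiv_lt_0_compat; [|lra].
  specialize (Hinc t (t + d / 2) Ht ltac:(lra)); lra. }
apply Rabs_def2 in Hdd; lra.
Qed.

(* [Derive a t] is nonnegative by monotonicity, and nonzero because the chain
   rule applied to [b o a = id] gives [Derive a t * Derive b (a t) = 1]. *)
Lemma Derive_pos_of_diffeo (a : R -> R) t :
  orient_pres_diffeo_Rplus a -> 0 < t -> 0 < Derive a t.
Proof.
intros [Hpos [[Hda _] [[b [_ [Hba [_ [Hdb _]]]]] Hinc]]] Ht.
pose proof (Derive_correct _ _ (Hda t Ht)) as Da.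
pose proof (Derive_correct _ _ (Hdb (a t) (Hpos t Ht))) as Db.
assert (Did : is_derive (fun x => x) t (Derive a t * Derive b (a t))).
{ eapply is_derive_ext_loc; [|exact (is_derive_comp _ _ _ _ _ Db Da)].
  exists (mkposreal t Ht); intros y Hy; apply Hba.
  destruct (proj1 (ball_R _ _ _) Hy); simpl in *; lra. }
assert (Hprod : Derive a t * Derive b (a t) = 1).
{ rewrite <- (is_derive_unique _ _ _ Did). exact (is_derive_unique _ _ _ (is_derive_id t)). }
destruct (is_derive_increasing_nonneg a t _ Ht Hinc Da) as [Hlt | Heq]; [easy|].
rewrite <- Heq in Hprod; lra.
Qed.

Lemma SOS_Derive_bounds a : SOS a ->
  exists m0 M0, 0 < m0 /\ forall t, 0 < t -> m0 <= Derive a t <= M0.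
Proof.
intros [Hdiff [_ [[_ [B HB]] _]]].
exists (exp (- B)), (exp B); split; [apply exp_pos|].
intros t Ht; specialize (HB t Ht); rewrite Cmod_R in HB.
apply Rabs_le_between in HB.
rewrite <- (exp_ln _ (Derive_pos_of_diffeo a t Hdiff Ht)).
split; apply exp_le_compat; lra.
Qed.

Lemma MVT_Derive_bounds a m0 M0 s t : C1_on_Rplus a ->
  (forall t, 0 < t -> m0 <= Derive a t <= M0) -> 0 < s -> s < t ->
  m0 * (t - s) <= a t - a s <= M0 * (t - s).
Proof.
intros [Hda _] HD Hs Hst.
destruct (MVT_gen a s t (Derive a)) as [x [Hx ->]];
  rewrite ?Rmin_left, ?Rmax_right in * by lra.
- intros x Hx; apply Derive_correct, Hda; lra.
- intros x Hx; apply continuity_pt_filterlim.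
  apply (ex_derive_continuous (K := R_AbsRing) (V := R_NormedModule)), Hda; lra.
- specialize (HD x ltac:(lra)); split; nra.
Qed.

(* The lower bound lets [s] tend to [0] in the mean value inequality; the
   upper bound does the same with [s = b y], [y] tending to [0]. *)
Lemma SOS_linear_bounds a : SOS a ->
  exists m M, 0 < m < 1 /\ 1 < M /\ forall t, 0 < t -> m * t <= a t <= M * t.
Proof.
intros HS; destruct (SOS_Derive_bounds a HS) as [m0 [M0 [Hm0 HD]]].
destruct HS as [[Hpos [HC1 [[b [Hbp [_ [Hab _]]]] Hinc]]] _].
assert (HM0 : 0 <= M0) by (destruct (HD 1 ltac:(lra)); lra).
assert (Hlow : forall t, 0 < t -> m0 * t <= a t).
{ intros t Ht; apply Rle_plus_epsilon; intros eps Heps.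
  destruct (Rlt_or_le eps (m0 * t)) as [Hsmall | Hbig]; [|pose proof (Hpos t Ht); lra].
  set (s := eps / m0).
  assert (Hs : s * m0 = eps) by (unfold s; field; lra).
  destruct (MVT_Derive_bounds a m0 M0 s t HC1 HD) as [H _];
    [apply Rdiv_lt_0_compat; lra | nra |].
  pose proof (Hpos s ltac:(apply Rdiv_lt_0_compat; lra)); nra. }
assert (Hup : forall t, 0 < t -> a t <= M0 * t).
{ intros t Ht; apply Rle_plus_epsilon; intros y Hy.
  destruct (Rlt_or_le y (a t)) as [Hsmall | Hbig]; [|nra].
  pose proof (Hbp y Hy) as Hby.
  assert (Hbt : b y < t).
  { destruct (Rlt_or_le (b y) t) as [|Hge]; [easy|].
    destruct (Rle_lt_or_eq_dec _ _ Hge) as [Hgt | Heq].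
    - specialize (Hinc t (b y) Ht Hgt); rewrite Hab in Hinc; lra.
    - rewrite Heq, Hab in Hsmall; lra. }
  destruct (MVT_Derive_bounds a m0 M0 (b y) t HC1 HD Hby Hbt) as [_ H].
  rewrite Hab in H; nra. }
exists (Rmin m0 (1 / 2)), (Rmax M0 2); split; [split|split].
- apply Rmin_glb_lt; lra.
- pose proof (Rmin_r m0 (1 / 2)); lra.
- pose proof (Rmax_r M0 2); lra.
- intros t Ht; specialize (Hlow t Ht); specialize (Hup t Ht).
  pose proof (Rmin_l m0 (1 / 2)); pose proof (Rmax_l M0 2); split; nra.
Qed.

Lemma SOS_pos_continuous a : SOS a -> forall t, 0 < t -> 0 < a t /\ continuous a t.
Proof.
intros [[Hpos [[Hda _] _]] _] t Ht; split; [now apply Hpos|].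
exact (ex_derive_continuous (K := R_AbsRing) (V := R_NormedModule) _ _ (Hda t Ht)).
Qed.

Definition osc_le (f : R -> C) (lam eps r : R) : Prop :=
  forall t tau, lam * r <= t <= r -> lam * r <= tau <= r -> Cmod (f t - f tau) <= eps.

Definition osc_vanishes_along (F : (R -> Prop) -> Prop) (f : R -> C) : Prop :=
  forall lam, 0 < lam < 1 -> forall eps, 0 < eps -> F (osc_le f lam eps).

Definition dilation_stable (F : (R -> Prop) -> Prop) : Prop :=
  forall k, 0 < k -> forall P, F P -> F (fun r => P (k * r)).

Lemma osc_vanishes_at_0_at_right f lam :
  osc_vanishes_at_0 f lam <-> forall eps, 0 < eps -> at_right 0 (osc_le f lam eps).
Proof.
split; intros H eps Heps; destruct (H eps Heps) as [d Hd].
- destruct Hd as [Hd0 Hd]; exists (mkposreal d Hd0); intros r Hr Hr0.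
  destruct (proj1 (ball_R _ _ _) Hr); simpl in *.
  exact (Hd r ltac:(lra)).
- exists d; split; [apply cond_pos|]; intros r Hr.
  apply Hd; [apply ball_R; simpl |]; lra.
Qed.

Lemma osc_vanishes_at_oo_p_infty f lam :
  osc_vanishes_at_oo f lam <->
  forall eps, 0 < eps -> Rbar_locally p_infty (osc_le f lam eps).
Proof.
split; intros H eps Heps; destruct (H eps Heps) as [N HN].
- exists N; exact (proj2 HN).
- exists (Rmax N 1); split; [pose proof (Rmax_r N 1); lra|].
  intros r Hr; pose proof (Rmax_l N 1); exact (HN r ltac:(lra)).
Qed.

Lemma dilation_stable_at_right_0 : dilation_stable (at_right 0).
Proof.
intros k Hk P [d Hd].
assert (Hdk : 0 < d / k) by (apply Rdiv_lt_0_compat; [apply cond_pos | easy]).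
exists (mkposreal _ Hdk); intros r Hr Hr0.
destruct (proj1 (ball_R _ _ _) Hr) as [_ Hrd]; simpl in Hrd.
assert (Hkr : k * r < d).
{ apply (Rmult_lt_reg_r (/ k)); [now apply Rinv_0_lt_compat|].
  rewrite (Rmult_comm k), Rmult_assoc, Rinv_r, Rmult_1_r by lra; lra. }
apply Hd; [apply ball_R; simpl|]; nra.
Qed.

Lemma dilation_stable_p_infty : dilation_stable (Rbar_locally p_infty).
Proof.
intros k Hk P [N HN]; exists (N / k); intros r Hr; apply HN.
apply (Rmult_lt_reg_r (/ k)); [now apply Rinv_0_lt_compat|].
rewrite (Rmult_comm k), Rmult_assoc, Rinv_r, Rmult_1_r by lra; lra.
Qed.

Lemma filterlim_locally_0_C {T} (F : (T -> Prop) -> Prop) {FF : Filter F} (g : T -> C) :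
  (forall eps, 0 < eps -> F (fun x => Cmod (g x) <= eps)) -> filterlim g F (locally (RtoC 0)).
Proof.
intros H; apply (proj2 (filterlim_locally (U := C_UniformSpace) _ _)); intros eps.
assert (He : 0 < eps / 2) by (destruct eps; simpl; lra).
refine (filter_imp _ _ _ (H _ He)); intros x Hx.
apply (norm_compat1 (K := C_AbsRing) (V := C_NormedModule)).
change (Cmod (g x - 0)%C < eps); replace (g x - 0)%C with (g x) by ring.
destruct eps; simpl in *; lra.
Qed.

Section Squeezed.

Variables (a : R -> R) (m M : R).
Hypotheses (Hm : 0 < m < 1) (HM : 1 < M).
Hypothesis Hsq : forall t, 0 < t -> m * t <= a t <= M * t.

Variable F : (R -> Prop) -> Prop.
Context {FF : Filter F}.
Hypotheses (Fpos : F (fun r => 0 < r)) (Fdil : dilation_stable F).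

Lemma squeeze_ratio lam : 0 < lam <= 1 -> 0 < m * lam / M < 1.
Proof.
intros Hlam; split; [apply Rdiv_lt_0_compat; nra|].
apply (Rmult_lt_reg_r M); [lra|]; field_simplify; nra.
Qed.

Lemma osc_le_comp f lam eps r : 0 < lam -> 0 < r ->
  osc_le f (m * lam / M) eps (M * r) -> osc_le (fun t => f (a t)) lam eps r.
Proof.
intros Hlam Hr Hosc t tau Ht Htau.
assert (Hwin : m * lam / M * (M * r) = m * (lam * r)) by (field; lra).
destruct (Hsq t ltac:(nra)); destruct (Hsq tau ltac:(nra)).
apply Hosc; rewrite Hwin; split; nra.
Qed.

Lemma osc_vanishes_along_comp f :
  osc_vanishes_along F f -> osc_vanishes_along F (fun t => f (a t)).
Proof.
intros Hf lam Hlam eps Heps.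
apply (filter_imp _ _ (fun r Hr => osc_le_comp f lam eps r (proj1 Hlam) (proj1 Hr) (proj2 Hr))).
apply filter_and; [exact Fpos|].
apply Fdil; [lra|]; apply Hf; [apply squeeze_ratio; lra | easy].
Qed.

Lemma filterlim_sub_comp f : osc_vanishes_along F f ->
  filterlim (fun t => (f t - f (a t))%C) F (locally (RtoC 0)).
Proof.
intros Hf; apply (filterlim_locally_0_C F); intros eps Heps.
assert (Hratio : 0 < m / M < 1)
  by (rewrite <- (Rmult_1_r m); apply squeeze_ratio; lra).
refine (filter_imp (F := F) _ _ _ (filter_and _ _ Fpos (Fdil M ltac:(lra) _ (Hf _ Hratio eps Heps)))).
intros t [Ht Hosc].
assert (Hwin : m / M * (M * t) = m * t) by (field; lra).
destruct (Hsq t Ht); unfold osc_le in Hosc; apply Hosc; rewrite Hwin; split; nra.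
Qed.

End Squeezed.

Lemma Cb_comp (f : R -> C) (a : R -> R) :
  Cb f -> (forall t, 0 < t -> 0 < a t /\ continuous a t) -> Cb (fun t => f (a t)).
Proof.
intros [Hf [K HK]] Ha; split.
- intros t Ht; destruct (Ha t Ht); now apply continuous_comp, Hf.
- exists K; intros t Ht; apply HK, Ha, Ht.
Qed.

Lemma Cb_minus (f g : R -> C) : Cb f -> Cb g -> Cb (fun t => (f t - g t)%C).
Proof.
intros [Hf [K HK]] [Hg [L HL]]; split.
- intros t Ht; exact (continuous_minus f g t (Hf t Ht) (Hg t Ht)).
- exists (K + L); intros t Ht; unfold Cminus.
  eapply Rle_trans; [apply Cmod_triangle|]; rewrite Cmod_opp.
  apply Rplus_le_compat; auto.
Qed.

Theorem lemma2p3 (c : R -> C) (alpha : R -> R) :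
  SO c -> SOS alpha ->
  SO (fun t => c (alpha t)) /\
  Cb (fun t => (c t - c (alpha t))%C) /\
  filterlim (fun t => (c t - c (alpha t))%C) (at_right 0) (locally (RtoC 0)) /\
  filterlim (fun t => (c t - c (alpha t))%C) (Rbar_locally p_infty) (locally (RtoC 0)).
Proof.
intros [Hc Hosc] HS.
destruct (SOS_linear_bounds alpha HS) as [m [M [Hm [HM Hsq]]]].
assert (Hpos0 : at_right 0 (fun r => 0 < r)) by (exists (mkposreal 1 Rlt_0_1); easy).
assert (Hposoo : Rbar_locally p_infty (fun r => 0 < r)) by (exists 0; easy).
assert (Hc0 : osc_vanishes_along (at_right 0) c)
  by (intros lam Hlam; apply osc_vanishes_at_0_at_right, Hosc, Hlam).
assert (Hcoo : osc_vanishes_along (Rbar_locally p_infty) c)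
  by (intros lam Hlam; apply osc_vanishes_at_oo_p_infty, Hosc, Hlam).
split; [split; [apply Cb_comp, SOS_pos_continuous | intros lam Hlam; split] | split; [|split]];
  try easy.
- apply osc_vanishes_at_0_at_right; revert lam Hlam.
  exact (osc_vanishes_along_comp alpha m M Hm HM Hsq _ Hpos0 dilation_stable_at_right_0 c Hc0).
- apply osc_vanishes_at_oo_p_infty; revert lam Hlam.
  exact (osc_vanishes_along_comp alpha m M Hm HM Hsq _ Hposoo dilation_stable_p_infty c Hcoo).
- apply Cb_minus, Cb_comp, SOS_pos_continuous; easy.
- exact (filterlim_sub_comp alpha m M Hm HM Hsq _ Hpos0 dilation_stable_at_right_0 c Hc0).
- exact (filterlim_sub_comp alpha m M Hm HM Hsq _ Hposoo dilation_stable_p_infty c Hcoo).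
Qed.
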